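(* Let $p$ be an odd prime, $q=p^e$ with $e\ge 1$, and let $k$ be an integer with $1\le k\le e$. Then $F_{2p^k}(1,x)$ is a permutation polynomial of $\mathbb{F}_q$ if and only if $\gcd\!\left(\frac{p^k-1}{2},\,q-1\right)=1$.
   Context: For an integer $n\ge 1$, the $n$-th reversed Dickson polynomial of the third kind is $F_n(a,x)=\sum_{i=0}^{\lfloor n/2\rfloor}\frac{n-2i}{n-i}\binom{n-i}{i}(-x)^i a^{n-2i}$, where each coefficient $\frac{n-2i}{n-i}\binom{n-i}{i}$ is an integer (read in $\mathbb{F}_q$), and $F_0(a,x)=0$. A polynomial $f\in\mathbb{F}_q[x]$ is a permutation polynomial of $\mathbb{F}_q$ if $c\mapsto f(c)$ is a bijection of $\mathbb{F}_q$. *)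

From HB Require Import structures.
From mathcomp Require Import all_boot all_order all_algebra all_field.
Set Implicit Arguments. Unset Strict Implicit. Unset Printing Implicit Defensive.
Import GRing.Theory.
Local Open Scope ring_scope.

(* Integer coefficient (n-2i)/(n-i) * C(n-i, i), computed exactly in nat
   (the division is exact; for n >= 1 and i <= n/2 we have n - i >= 1). *)
Definition rd3_coef (n i : nat) : nat :=
  ((n - i.*2) * 'C(n - i, i) %/ (n - i))%N.

(* n-th reversed Dickson polynomial of the third kind F_n(a, x), as a
   polynomial in x over the ring R; F_0 = 0. *)
Definition rdickson3 (R : comNzRingType) (n : nat) (a : R) : {poly R} :=
  if n is 0 then 0 else
  \sum_(i < n./2.+1)
     ((rd3_coef n i)%:R * (-1) ^+ i * a ^+ (n - i.*2)) *: 'X^i.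

Definition is_perm_poly (F : finFieldType) (f : {poly F}) : Prop :=
  bijective (fun c : F => f.[c]).

From HB Require Import structures.
From mathcomp Require Import all_boot all_order all_algebra all_field all_fingroup all_solvable.
From mathcomp Require Import zify ring.
Set Implicit Arguments. Unset Strict Implicit. Unset Printing Implicit Defensive.
Import GRing.Theory.
Local Open Scope ring_scope.

(* The polynomials F_n(1, x) satisfy F_(n+2) = F_(n+1) - x F_n, so after the
   substitution 4x = 1 - s^2 they obey the Binet formula
   s F_n 2^n = (1 + s)^n - (1 - s)^n.  In characteristic p the Frobenius map
   collapses the right-hand side at n = 2 p^k, which gives
   F_(2p^k)(1, x) = (1 - 4x)^m with m = (p^k - 1)/2.  Up to the affine
   bijection x |-> 1 - 4x this is the power map c |-> c^m, which is injective
   on F_q exactly when m is coprime to the order q - 1 of the unit group: a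
   common prime factor r yields, by Cauchy's theorem, a unit of order r that
   is a nontrivial m-th root of 1. *)

Lemma rd3_coefS m i : rd3_coef m.+1 i = 'C(m - i, i).
Proof.
rewrite /rd3_coef; have [le_im | lt_mi] := leqP i m.
  have -> : (m.+1 - i.*2 = (m.+1 - i) - i)%N by lia.
  by rewrite -mul_bin_down mulKn; [congr 'C(_, _); lia | lia].
by rewrite (_ : m.+1 - i.*2 = 0)%N ?mul0n ?div0n ?bin_small //; lia.
Qed.

Section ReversedDicksonAtOne.
Variable R : comNzRingType.
Local Notation U n := (rdickson3 n (1 : R)).

Lemma coef_rdickson3_1 n i :
  (U n)`_i = if n is m.+1 then (-1) ^+ i * ('C(m - i, i))%:R else 0.
Proof.
case: n => [|m]; first by rewrite coef0.
rewrite /rdickson3 coef_sum.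
under eq_bigr => j _ do rewrite expr1n mulr1 coefZ coefXn.
have [lt_i_half | ge_i_half] := ltnP i (m.+1)./2.+1.
  rewrite (bigD1 (Ordinal lt_i_half)) //= eqxx mulr1 rd3_coefS mulrC big1 ?addr0 //.
  move=> j /negPf; rewrite -val_eqE /= eq_sym => ->; exact: mulr0.
rewrite big1 => [|j _]; last by rewrite gtn_eqF ?mulr0 // (leq_trans (ltn_ord j)).
by rewrite bin_small ?mulr0 //; move: ge_i_half; rewrite -!divn2; lia.
Qed.

Lemma rdickson3_1_1 : U 1 = 1.
Proof.
apply/polyP => i; rewrite coef_rdickson3_1 coef1 sub0n.
by case: i => [|i]; rewrite ?mul1r ?bin0n ?mulr0.
Qed.

Lemma rdickson3_1SS n : U n.+2 = U n.+1 - 'X * U n.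
Proof.
apply/polyP => -[|i]; rewrite coefB coefXM !coef_rdickson3_1 /=.
  by case: n => [|n]; rewrite ?subr0 // !subn0 !bin0.
case: n => [|n]; first by rewrite subr0 !bin_small.
have [le_in | lt_ni] := leqP i n; last by rewrite !bin_small ?mulr0 ?subr0 //; lia.
rewrite (_ : n.+2 - i.+1 = (n - i).+1)%N; last lia.
by rewrite (_ : n.+1 - i.+1 = n - i)%N ?binS ?natrD ?exprS; [ring | lia].
Qed.

End ReversedDicksonAtOne.

Section LucasSequence.
Variables (R : comNzRingType) (x s : R) (w : nat -> R).
Hypotheses (w0 : w 0 = 0) (w1 : w 1 = 1) (wSS : forall n, w n.+2 = w n.+1 - x * w n).
Hypothesis discr : 4%:R * x = 1 - s ^+ 2.

Lemma lucas_binet n : s * w n * 2%:R ^+ n = (1 + s) ^+ n - (1 - s) ^+ n.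
Proof.
suff binet2 : forall n, s * w n * 2%:R ^+ n = (1 + s) ^+ n - (1 - s) ^+ n /\
    s * w n.+1 * 2%:R ^+ n.+1 = (1 + s) ^+ n.+1 - (1 - s) ^+ n.+1.
  by case: (binet2 n).
elim=> [|{}n [IHn IHn1]]; first by rewrite w0 w1; split; ring.
split=> //; rewrite wSS.
have -> : s * (w n.+1 - x * w n) * 2%:R ^+ n.+2 =
    2%:R * (s * w n.+1 * 2%:R ^+ n.+1) - 4%:R * x * (s * w n * 2%:R ^+ n).
  by rewrite !exprS; ring.
by rewrite IHn IHn1 discr !exprS; ring.
Qed.

Lemma lucas_binet_pchar p k : p \in [pchar R] ->
  s * w (2 * p ^ k) * 4%:R = 4%:R * s ^+ (p ^ k).
Proof.
move=> pR; set q := (p ^ k)%N.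
have q_pchar : [pchar R].-nat q.
  by rewrite (eq_pnat _ (pcharf_eq pR)) pnatX pnat_id ?(pcharf_prime pR).
have frobD (y : R) : (1 + y) ^+ q = 1 + y ^+ q by rewrite exprDn_pchar // expr1n.
have two_q : 2%:R ^+ q = 2%:R :> R by rewrite mulr2n frobD expr1n.
have := lucas_binet (q * 2); rewrite !exprM mulnC two_q !frobD.
rewrite exprNn_pchar // => binet.
by rewrite (_ : 4%:R = 2%:R ^+ 2) ?binet; [ring | rewrite -natrX].
Qed.

End LucasSequence.

Lemma pchar_odd_natr4_neq0 (R : nzRingType) p : p \in [pchar R] -> odd p ->
  4%:R != 0 :> R.
Proof.
move=> pR odd_p; rewrite -(dvdn_pcharf pR) -[4%N]/(2 ^ 2)%N.
rewrite Euclid_dvdX ?(pcharf_prime pR) // andbT dvdn_prime2 ?(pcharf_prime pR) //.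
by apply: contraL odd_p => /eqP ->.
Qed.

Lemma rdickson3_1_pchar (F : fieldType) p k : p \in [pchar F] -> odd p ->
  rdickson3 (2 * p ^ k) (1 : F) = (1 - 4%:R *: 'X) ^+ ((p ^ k - 1) %/ 2).
Proof.
move=> pF odd_p; set q := (p ^ k)%N; set m := ((q - 1) %/ 2)%N.
have four_neq0 := pchar_odd_natr4_neq0 pF odd_p.
have q_eq : q = (2 * m).+1.
  have : (q %% 2 = 1)%N by rewrite modn2 oddX odd_p orbT.
  by rewrite /m; lia.
(* Take s = 'X and x = xs = (1 - s^2)/4; since composition with the
   nonconstant xs is injective, the identity in s transfers back to x. *)
pose xs : {poly F} := 4%:R^-1 *: (1 - 'X ^+ 2).
have xs4 : 4%:R *: xs = 1 - 'X ^+ 2 by rewrite scalerA mulfV ?scale1r.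
have size_xs : (1 < size xs)%N.
  by rewrite size_scale ?invr_eq0 // addrC size_polyDl size_polyN size_polyXn ?size_poly1.
pose w n := rdickson3 n (1 : F) \Po xs.
have w2q : w (2 * q)%N = ('X ^+ 2) ^+ m.
  have Xq : 'X * (4%:R : {poly F}) != 0.
    by rewrite mulf_neq0 ?polyX_eq0 // -polyC_natr polyC_eq0.
  apply: (mulfI Xq); rewrite mulrAC (lucas_binet_pchar (x := xs)) //.
  - by rewrite -/q q_eq exprS -exprM; ring.
  - by rewrite /w comp_poly0.
  - by rewrite /w rdickson3_1_1 rmorph1.
  - by move=> n; rewrite /w rdickson3_1SS comp_polyB comp_polyM comp_polyX.
  - by rewrite -xs4 scaler_nat mulr_natl.
  - by rewrite pchar_poly.
apply/eqP; rewrite -subr_eq0 -(comp_poly_eq0 _ size_xs) comp_polyB -/(w _) w2q.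
by rewrite rmorphXn rmorphB rmorph1 /= comp_polyZ comp_polyX xs4 subKr subrr.
Qed.

Lemma expg_injective_coprime (gT : finGroupType) (G : {group gT}) m :
  {in G &, injective (fun x : gT => (x ^+ m)%g)} <-> coprime #|G| m.
Proof.
split=> [injXm | coGm]; last exact: can_in_inj (expgK coGm).
apply: contraT => not_coGm.
have r_prime : prime (pdiv (gcdn #|G| m)).
  by rewrite pdiv_prime // ltn_neqAle eq_sym not_coGm gcdn_gt0 cardG_gt0.
have r_dvd := pdiv_dvd (gcdn #|G| m).
have [x Gx ox] := Cauchy r_prime (dvdn_trans r_dvd (dvdn_gcdl _ _)).
have xm1 : (x ^+ m = 1 ^+ m)%g.
  by rewrite expg1n; apply/eqP; rewrite -order_dvdn ox (dvdn_trans r_dvd (dvdn_gcdr _ _)).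
by move: (prime_gt1 r_prime); rewrite -ox (injXm _ _ Gx (group1 G) xm1) order1.
Qed.

Lemma expf_injective_coprime (F : finFieldType) m : (0 < m)%N ->
  injective (fun c : F => c ^+ m) <-> coprime #|F|.-1 m.
Proof.
move=> m_gt0; rewrite -card_finField_unit.
apply: (iff_trans _ (expg_injective_coprime [set: {unit F}]%G m)).
split=> [injXm u v _ _ /(congr1 val) | injXm a b /= abm].
  by rewrite !FinRing.val_unitX => /injXm /val_inj.
have [a0|a0] := eqVneq a 0.
  by move: abm; rewrite a0 expr0n gtn_eqF // => /esym/eqP; rewrite expf_eq0 m_gt0 => /eqP ->.
have [b0|b0] := eqVneq b 0.
  by move: abm; rewrite b0 expr0n gtn_eqF // => /eqP; rewrite expf_eq0 m_gt0 (negPf a0).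
have Ua : a \is a GRing.unit by rewrite unitfE.
have Ub : b \is a GRing.unit by rewrite unitfE.
suff /(congr1 val) : FinRing.Unit Ua = FinRing.Unit Ub by [].
by apply: injXm; rewrite ?inE //; apply: val_inj; rewrite !FinRing.val_unitX.
Qed.

Lemma perm_poly_affine_pow (F : finFieldType) (a b : F) m : a != 0 ->
  is_perm_poly ((b%:P + a *: 'X) ^+ m) <-> injective (fun c : F => c ^+ m).
Proof.
move=> a0; pose aff c := b + a * c; pose affV c := (c - b) / a.
have affK : cancel aff affV by move=> c; rewrite /aff /affV addrC addKr mulrC mulKf.
have affVK : cancel affV aff by move=> c; rewrite /aff /affV mulrC divfK ?subrKC.
have evalE : (fun c => ((b%:P + a *: 'X) ^+ m).[c]) =1 (fun c => c ^+ m) \o aff.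
  by move=> c; rewrite /= horner_exp hornerD hornerC hornerZ hornerX.
split=> [/eq_bij/(_ _ evalE)/bij_inj injXmA x y xym | injXm].
  by rewrite -(affVK x) -(affVK y); congr aff; apply: injXmA; rewrite /= !affVK.
exact: eq_bij (injF_bij (inj_comp injXm (can_inj affK))) _ (fsym evalE).
Qed.

Theorem theorem2p7 (p e k : nat) (F : finFieldType) :
  prime p -> odd p -> (1 <= k <= e)%N -> #|F| = (p ^ e)%N ->
  is_perm_poly (rdickson3 (2 * p ^ k) (1 : F)) <->
  gcdn ((p ^ k - 1) %/ 2) (p ^ e - 1) = 1%N.
Proof.
move=> p_prime odd_p /andP[k_gt0 _] cardF.
have pF : p \in [pchar F] := card_finPcharP cardF p_prime.
have m_gt0 : (0 < (p ^ k - 1) %/ 2)%N.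
  have := odd_prime_gt2 odd_p p_prime.
  have : (p ^ 1 <= p ^ k)%N := leq_pexp2l (prime_gt0 p_prime) k_gt0.
  lia.
rewrite rdickson3_1_pchar // -polyC1 -scaleNr perm_poly_affine_pow; last first.
  by rewrite oppr_eq0 (pchar_odd_natr4_neq0 pF odd_p).
rewrite (expf_injective_coprime _ m_gt0) cardF !subn1 coprime_sym.
exact: iff_sym (rwP eqP).
Qed.
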